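(* Let $(\mathsf{X},\mu)$, $(\mathsf{Y},\nu)$ be Polish probability spaces, $c:\mathsf{X}\times\mathsf{Y}\to[0,\infty)$ continuous, $\pi_\varepsilon$ the $(c,\varepsilon)$-cyclically invariant coupling for each $\varepsilon>0$ (assumed to exist), and assume $\pi_\varepsilon\to\pi_*$ weakly as $\varepsilon\to0$ for some $\pi_*\in\Pi(\mu,\nu)$. Let $\Gamma:=\operatorname{spt}\pi_*$, $\mathsf{X}_0:=\operatorname{proj}_{\mathsf{X}}\Gamma$, $\mathsf{Y}_0:=\operatorname{proj}_{\mathsf{Y}}\Gamma$. Assume that uniqueness of Kantorovich potentials holds on $\mathsf{X}_0$: for any $c$-convex functions $\psi_1,\psi_2$ on $\mathsf{X}$ with $\Gamma\subset\partial_c\psi_i$ ($i=1,2$), the difference $\psi_1-\psi_2$ is constant on $\mathsf{X}_0$. Then for any Kantorovich potential $\psi$, $$I(x,y)=c(x,y)-\psi^c(y)+\psi(x),\qquad (x,y)\in\mathsf{X}_0\times\mathsf{Y}_0.$$ In particular $I<\infty$ on $\mathsf{X}_0\times\mathsf{Y}_0$. Moreover, if $(x,y),(x',y')\in\mathsf{X}_0\times\mathsf{Y}_0$ are such that $(x',y),(x,y')\in\Gamma$, then $$I(x,y)+I(x',y')=c(x,y)+c(x',y')-c(x,y')-c(x',y).$$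
   Context: $\Pi(\mu,\nu)$ is the set of couplings of $\mu,\nu$ and $P:=\mu\otimes\nu$. A coupling $\pi$ is $(c,\varepsilon)$-cyclically invariant if $\pi\sim P$ and its density admits a version $\frac{d\pi}{dP}:\mathsf{X}\times\mathsf{Y}\to(0,\infty)$ with $\prod_{i=1}^k\frac{d\pi}{dP}(x_i,y_i)=\exp\big(-\frac1\varepsilon[\sum_{i=1}^k c(x_i,y_i)-\sum_{i=1}^k c(x_i,y_{i+1})]\big)\prod_{i=1}^k\frac{d\pi}{dP}(x_i,y_{i+1})$ for all $k$ and points, $y_{k+1}:=y_1$. $\Gamma$ is $c$-cyclically monotone. A proper function $\psi:\mathsf{X}\to(-\infty,\infty]$ is $c$-convex if $\psi(x)=\sup_{y\in\mathsf{Y}}[\zeta(y)-c(x,y)]$ for some $\zeta:\mathsf{Y}\to[-\infty,\infty]$; its $c$-conjugate is $\psi^c(y):=\inf_{x\in\mathsf{X}}[\psi(x)+c(x,y)]$ and its $c$-subdifferential is $\partial_c\psi=\{(x,y):\psi^c(y)-\psi(x)=c(x,y)\}$. A Kantorovich potential is a $c$-convex $\psi$ with $\Gamma\subset\partial_c\psi$. The function $I$ is $I(x,y):=\sup_{k\ge2}\sup_{(x_i,y_i)_{i=2}^k\subset\Gamma}\sup_{\sigma\in\Sigma(k)}\sum_{i=1}^k c(x_i,y_i)-\sum_{i=1}^k c(x_i,y_{\sigma(i)})$ with $(x_1,y_1):=(x,y)$ and $\Sigma(k)$ the permutations of $\{1,\dots,k\}$. *)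

From HB Require Import structures.
From mathcomp Require Import all_boot all_order all_algebra.
From mathcomp Require Import fingroup perm.
From mathcomp Require Import all_classical all_reals all_analysis.
Set Implicit Arguments. Unset Strict Implicit. Unset Printing Implicit Defensive.
Import Order.TTheory GRing.Theory Num.Theory.
Import numFieldNormedType.Exports.
Local Open Scope classical_set_scope.
Local Open Scope ring_scope.

Definition borel {R : realType} (T : completePseudoMetricType R) :=
  g_sigma_algebraType (@open T).

(* A Polish space, represented by a complete metric inducing its topology:
   Hausdorff (so the pseudometric is a metric) and separable. *)
Definition polish {R : realType} (T : completePseudoMetricType R) : Prop :=
  hausdorff_space T /\ exists D : set T, countable D /\ dense D.

Definition coupling {R : realType} {X Y : completePseudoMetricType R}
  (mu : probability (borel X) R) (nu : probability (borel Y) R)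
  (pi : probability (borel X * borel Y)%type R) : Prop :=
  (forall A : set (borel X), measurable A -> pi (A `*` setT) = mu A) /\
  (forall B : set (borel Y), measurable B -> pi (setT `*` B) = nu B).

Definition cyclically_invariant {R : realType} {X Y : completePseudoMetricType R}
  (c : X * Y -> R) (eps : R)
  (mu : probability (borel X) R) (nu : probability (borel Y) R)
  (pi : probability (borel X * borel Y)%type R) : Prop :=
  pi `<< (mu \x nu)%E /\ (mu \x nu)%E `<< pi /\
  exists f : X * Y -> R,
    (forall z, 0 < f z) /\
    measurable_fun setT (f : borel X * borel Y -> R) /\
    (forall A : set (borel X * borel Y), measurable A ->
       pi A = (\int[(mu \x nu)%E]_(z in A) (f z)%:E)%E) /\
    (forall (k : nat) (x : nat -> X) (y : nat -> Y),
       \prod_(i < k) f (x i, y i) =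
       expR (- eps^-1 * (\sum_(i < k) c (x i, y i)
                        - \sum_(i < k) c (x i, y (i.+1 %% k)%N)))
       * \prod_(i < k) f (x i, y (i.+1 %% k)%N)).

Definition weak_conv {R : realType} {X Y : completePseudoMetricType R}
  (pi : R -> probability (borel X * borel Y)%type R)
  (pis : probability (borel X * borel Y)%type R) : Prop :=
  forall f : X * Y -> R, continuous f -> (exists M : R, forall z, `|f z| <= M) ->
    (fun e => (\int[pi e]_z (f z)%:E)%E) @ 0^'+ --> (\int[pis]_z (f z)%:E)%E.

(* Support of a measure: points all of whose open neighbourhoods have
   positive measure (= the smallest closed set of full measure). *)
Definition spt {R : realType} {X Y : completePseudoMetricType R}
  (pis : probability (borel X * borel Y)%type R) : set (X * Y) :=
  [set z | forall U : set (X * Y), open U -> U z -> (0 < pis U)%E].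

Definition projX {X Y : Type} (G : set (X * Y)) : set X :=
  [set x | exists y, G (x, y)].
Definition projY {X Y : Type} (G : set (X * Y)) : set Y :=
  [set y | exists x, G (x, y)].

Definition c_convex {R : realType} {X Y : Type} (c : X * Y -> R)
  (psi : X -> \bar R) : Prop :=
  (forall x, psi x != -oo%E) /\ (exists x, psi x != +oo%E) /\
  exists zeta : Y -> \bar R,
    forall x, psi x = ereal_sup [set (zeta y - (c (x, y))%:E)%E | y in setT].

Definition c_conj {R : realType} {X Y : Type} (c : X * Y -> R)
  (psi : X -> \bar R) (y : Y) : \bar R :=
  ereal_inf [set (psi x + (c (x, y))%:E)%E | x in setT].

Definition c_subdiff {R : realType} {X Y : Type} (c : X * Y -> R)
  (psi : X -> \bar R) : set (X * Y) :=
  [set z | (c_conj c psi z.2 - psi z.1)%E = (c z)%:E].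

Definition kantorovich_potential {R : realType} {X Y : Type} (c : X * Y -> R)
  (Gamma : set (X * Y)) (psi : X -> \bar R) : Prop :=
  c_convex c psi /\ Gamma `<=` c_subdiff c psi.

(* The function I: sup over k >= 2 (written k.+2), points (x_i,y_i)_{i>=2}
   in Gamma (index 0 here plays the role of index 1), permutations s. *)
Definition Ifun {R : realType} {X Y : Type} (c : X * Y -> R)
  (Gamma : set (X * Y)) (x : X) (y : Y) : \bar R :=
  ereal_sup [set v | exists (k : nat) (xs : 'I_k.+2 -> X) (ys : 'I_k.+2 -> Y)
                        (s : {perm 'I_k.+2}),
     [/\ xs ord0 = x, ys ord0 = y, (forall i, i != ord0 -> Gamma (xs i, ys i)) &
      v = (\sum_i c (xs i, ys i) - \sum_i c (xs i, ys (s i)))%:E]].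

From HB Require Import structures.
From mathcomp Require Import all_boot all_order all_algebra.
From mathcomp Require Import fingroup perm.
From mathcomp Require Import all_classical all_reals all_analysis.
From mathcomp Require Import lra.
Import Order.TTheory GRing.Theory Num.Theory.
Import numFieldNormedType.Exports.
Local Open Scope classical_set_scope.
Local Open Scope ring_scope.

(* The upper bound I <= c - psi^c + psi needs no uniqueness: the slack
   c(a,b) - psi^c(b) + psi(a) is nonnegative on X0 x Y0 and vanishes on Gamma,
   and the terms psi^c(b) - psi(a) cancel around any cycle.  For the lower
   bound fix (x', y) in Gamma and take Rockafellar's potential
     phi(z) = sup { sum_(i<n) (c(x_i,y_i) - c(x_(i+1),y_i))
                    + c(x_n,y_n) - c(z,y_n) }
   over chains (x',y) = (x_0,y_0), ..., (x_n,y_n) in Gamma.  It is c-convex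
   with Gamma in its c-subdifferential, so by uniqueness phi = psi - psi(x')
   on X0; closing a chain into a cycle through (x, y) gives
   phi(x) + c(x,y) - c(x',y) <= I(x,y).  The measure-theoretic hypotheses only
   serve to define Gamma. *)

Lemma big_ord_pred (V : nmodType) (m : nat) (F : nat -> nat -> V) :
  \sum_(i < m.+1) F i (ord_pred i) = F 0%N m + \sum_(j < m) F j.+1 j.
Proof.
rewrite big_ord_recl /= modn_small //; congr (_ + _).
by apply: eq_bigr => j _; rewrite add0n modnDr modn_small // ltnS ltnW.
Qed.

Section CyclicalMonotonicity.
Variables (R : realType) (X Y : Type) (c : X * Y -> R) (G : set (X * Y)).

Definition chain (x0 : X) (y0 : Y) (n : nat) (xs : nat -> X) (ys : nat -> Y) :=
  [/\ xs 0%N = x0, ys 0%N = y0 & forall i, (i <= n)%N -> G (xs i, ys i)].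

Definition chain_gain (n : nat) (xs : nat -> X) (ys : nat -> Y) : R :=
  \sum_(i < n) (c (xs i, ys i) - c (xs i.+1, ys i)) + c (xs n, ys n).

Definition chain_gain_sup (x0 : X) (y0 : Y) (w : Y) : \bar R :=
  ereal_sup [set v | exists n xs ys,
    [/\ chain x0 y0 n xs ys, ys n = w & v = (chain_gain n xs ys)%:E]].

Definition rockafellar (x0 : X) (y0 : Y) (z : X) : \bar R :=
  ereal_sup [set (chain_gain_sup x0 y0 w - (c (z, w))%:E)%E | w in setT].

Definition extend {T : Type} (n : nat) (f : nat -> T) (a : T) : nat -> T :=
  fun i => if i == n.+1 then a else f i.

Definition c_slack (psi : X -> \bar R) (a : X) (b : Y) : R :=
  c (a, b) - fine (c_conj c psi b) + fine (psi a).

Definition unique_potentials : Prop :=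
  forall psi1 psi2 : X -> \bar R, c_convex c psi1 -> c_convex c psi2 ->
    G `<=` c_subdiff c psi1 -> G `<=` c_subdiff c psi2 ->
  exists C : R, forall x, projX G x -> (psi1 x - psi2 x)%E = C%:E.

Lemma c_conj_le (psi : X -> \bar R) a b :
  (c_conj c psi b <= psi a + (c (a, b))%:E)%E.
Proof. by apply: ereal_inf_lbound; exists a. Qed.

Section Chains.
Context {x0 : X} {y0 : Y}.

Lemma chain_extend {n xs ys a b} : chain x0 y0 n xs ys -> G (a, b) ->
  chain x0 y0 n.+1 (extend n xs a) (extend n ys b).
Proof.
move=> [xs0 ys0 Gi] Gab; split=> // i; rewrite /extend.
by case: eqP => // /eqP ne; rewrite leq_eqVlt (negbTE ne) ltnS; apply: Gi.
Qed.

Lemma chain_gain_extend n xs ys a b :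
  chain_gain n.+1 (extend n xs a) (extend n ys b)
  = chain_gain n xs ys - c (a, ys n) + c (a, b).
Proof.
rewrite /chain_gain big_ord_recr /= /extend !eqxx (ltn_eqF (ltnSn n)) addrA.
congr (_ + _ - _ + _); apply: eq_bigr => i _.
by rewrite (@ltn_eqF i n.+1 (ltnW (ltn_ord i))) (@ltn_eqF i.+1 n.+1 (ltn_ord i)).
Qed.

Lemma rockafellar_ge z {n xs ys} : chain x0 y0 n xs ys ->
  ((chain_gain n xs ys - c (z, ys n))%:E <= rockafellar x0 y0 z)%E.
Proof.
move=> ch; apply: le_trans (ereal_sup_ubound _); last by exists (ys n).
by rewrite EFinB leeB // ereal_sup_ubound //; exists n, xs, ys.
Qed.

Lemma rockafellar_le z (B : \bar R) :
  (forall n xs ys, chain x0 y0 n xs ys ->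
     ((chain_gain n xs ys - c (z, ys n))%:E <= B)%E) ->
  (rockafellar x0 y0 z <= B)%E.
Proof.
move=> ub; apply: ge_ereal_sup => _ [w _ <-].
rewrite leeBlDr //; apply: ge_ereal_sup => _ [n [xs [ys [ch <- ->]]]].
by rewrite -leeBlDr // -EFinB; apply: ub.
Qed.

Lemma rockafellar_ge_base z : G (x0, y0) ->
  ((c (x0, y0) - c (z, y0))%:E <= rockafellar x0 y0 z)%E.
Proof.
move=> G0; have := @rockafellar_ge z 0 (fun=> x0) (fun=> y0).
by rewrite /chain_gain big_ord0 add0r; apply; split.
Qed.

Lemma rockafellar_step {a b} z : G (a, b) ->
  (rockafellar x0 y0 a <= rockafellar x0 y0 z + (c (z, b) - c (a, b))%:E)%E.
Proof.
move=> Gab; apply: rockafellar_le => n xs ys ch.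
have := rockafellar_ge z (chain_extend ch Gab).
rewrite chain_gain_extend /extend eqxx => le_ext.
rewrite -leeBlDr // -EFinB; apply: le_trans le_ext; rewrite lee_fin; lra.
Qed.

(* The cycle (x, y_0), (x_1, y_1), ..., (x_(n+1), y_(n+1)), each x_i facing
   y_(i-1) cyclically in the permuted sum. *)
Lemma cycle_gain_le_Ifun x {n xs ys} : chain x0 y0 n.+1 xs ys ->
  ((chain_gain n.+1 xs ys - c (x, ys n.+1) + (c (x, y0) - c (x0, y0)))%:E
   <= Ifun c G x y0)%E.
Proof.
move=> [xs0 ys0 Gi].
pose xs' i := if i is 0%N then x else xs i.
pose s : {perm 'I_n.+2} := perm (@ord_pred_inj n.+2).
have diag : \sum_(i < n.+2) c (xs' i, ys i)
            = c (x, y0) + \sum_(i < n.+1) c (xs i.+1, ys i.+1).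
  by rewrite big_ord_recl ys0.
have shifted : \sum_(i < n.+2) c (xs' i, ys (s i))
               = c (x, ys n.+1) + \sum_(i < n.+1) c (xs i.+1, ys i).
  under eq_bigr do rewrite permE.
  by rewrite (big_ord_pred _ _ (fun i j => c (xs' i, ys j))).
have telescope : \sum_(i < n.+1) c (xs i, ys i) + c (xs n.+1, ys n.+1)
                 = c (x0, y0) + \sum_(i < n.+1) c (xs i.+1, ys i.+1).
  by rewrite -(big_ord_recr n.+1 (fun i => c (xs i, ys i))) big_ord_recl xs0 ys0.
apply: ereal_sup_ubound; exists n, (fun i => xs' i), (fun i => ys i), s.
split=> //; first by case=> -[|i] lt_i //= _; apply: Gi.
congr (_%:E); rewrite diag shifted.
by move: telescope; rewrite /chain_gain sumrB; lra.
Qed.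

(* Repeating the last point of the chain keeps its gain and guarantees the
   two points that [Ifun] requires. *)
Lemma chain_gain_le_Ifun x {n xs ys} : chain x0 y0 n xs ys ->
  ((chain_gain n xs ys - c (x, ys n) + (c (x, y0) - c (x0, y0)))%:E
   <= Ifun c G x y0)%E.
Proof.
move=> ch; have [_ _ Gi] := ch.
have := cycle_gain_le_Ifun x (chain_extend ch (Gi n (leqnn n))).
by rewrite chain_gain_extend /extend eqxx addrNK.
Qed.

End Chains.

Section Potential.
Variable psi : X -> \bar R.
Hypothesis psi_pot : kantorovich_potential c G psi.

Lemma potential_on_graph {a b} : G (a, b) ->
  exists r : R, psi a = r%:E /\ c_conj c psi b = (r + c (a, b))%:E.
Proof.
move=> Gab; have [[psi_neq_ninfty _] sub] := psi_pot.
have := sub _ Gab; rewrite /c_subdiff /=.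
have := psi_neq_ninfty a.
case: (psi a) => [r| |] // _; case: (c_conj c psi b) => [r'| |] //= [<-].
by exists r; split => //; congr (_%:E); lra.
Qed.

Lemma potential_finite {a} : projX G a -> psi a = (fine (psi a))%:E.
Proof. by move=> [b /potential_on_graph [r [-> _]]]. Qed.

Lemma c_conj_finite {b} :
  projY G b -> c_conj c psi b = (fine (c_conj c psi b))%:E.
Proof. by move=> [a /potential_on_graph [r [_ ->]]]. Qed.

Lemma c_slack_eq0 {a b} : G (a, b) -> c_slack psi a b = 0.
Proof.
by move=> /potential_on_graph [r [pa cb]]; rewrite /c_slack pa cb /=; lra.
Qed.

Lemma c_slack_ge0 {a b} : projX G a -> projY G b -> 0 <= c_slack psi a b.
Proof.
move=> Xa Yb; have := c_conj_le psi a b.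
rewrite (potential_finite Xa) (c_conj_finite Yb) -EFinD lee_fin /c_slack; lra.
Qed.

Lemma chain_gain_le_potential {x0 y0 n xs ys} z :
  chain x0 y0 n xs ys -> projX G z ->
  chain_gain n xs ys - c (z, ys n) <= fine (psi z) - fine (psi x0).
Proof.
move=> [xs0 _ Gi] Xz.
have step a b z' : G (a, b) -> projX G z' ->
    c (a, b) - c (z', b) <= fine (psi z') - fine (psi a).
  move=> Gab Xz'; have := c_slack_ge0 Xz' (ex_intro _ a Gab).
  by have := c_slack_eq0 Gab; rewrite /c_slack; lra.
have partial m : (m <= n)%N ->
    \sum_(i < m) (c (xs i, ys i) - c (xs i.+1, ys i))
    <= fine (psi (xs m)) - fine (psi x0).
  elim: m => [|m IH] le_mn; first by rewrite big_ord0 xs0 subrr.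
  rewrite big_ord_recr /=; have := IH (ltnW le_mn).
  by have := step _ _ _ (Gi m (ltnW le_mn)) (ex_intro _ _ (Gi m.+1 le_mn)); lra.
have := partial n (leqnn n); have := step _ _ _ (Gi n (leqnn n)) Xz.
rewrite /chain_gain; lra.
Qed.

Lemma Ifun_le_c_slack x y : projX G x -> projY G y ->
  (Ifun c G x y <= (c_slack psi x y)%:E)%E.
Proof.
move=> Xx Yy; apply: ge_ereal_sup => _ [k [xs [ys [s [xs0 ys0 Gi ->]]]]].
rewrite lee_fin -xs0 -ys0.
have Xi i : projX G (xs i).
  by case: (eqVneq i ord0) => [->|/Gi]; [rewrite xs0 | exists (ys i)].
have Yi i : projY G (ys i).
  by case: (eqVneq i ord0) => [->|/Gi]; [rewrite ys0 | exists (xs i)].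
pose d i j := c_slack psi (xs i) (ys j).
have conj_perm : \sum_i fine (c_conj c psi (ys (s i)))
                 = \sum_i fine (c_conj c psi (ys i)).
  by rewrite [RHS](reindex_inj (@perm_inj _ s)).
have diag : \sum_i d i i = d ord0 ord0.
  by rewrite (bigD1 ord0) //= big1 ?addr0 // => i /Gi /c_slack_eq0.
have off_ge0 : 0 <= \sum_i d i (s i).
  by apply: sumr_ge0 => i _; apply: c_slack_ge0.
move: diag off_ge0; rewrite /d /c_slack !big_split /= !sumrN conj_perm; lra.
Qed.

Section RockafellarPotential.
Context {x0 : X} {y0 : Y}.
Hypothesis G0 : G (x0, y0).

Lemma rockafellar_finite {z} : projX G z ->
  rockafellar x0 y0 z = (fine (rockafellar x0 y0 z))%:E.
Proof.
move=> Xz; have ge := rockafellar_ge_base z G0.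
have le : (rockafellar x0 y0 z <= (fine (psi z) - fine (psi x0))%:E)%E.
  apply: rockafellar_le => n xs ys ch.
  by rewrite lee_fin (chain_gain_le_potential _ ch).
by move: ge le; case: (rockafellar x0 y0 z).
Qed.

Lemma rockafellar_c_convex : c_convex c (rockafellar x0 y0).
Proof.
split.
  by move=> z; have := rockafellar_ge_base z G0; case: (rockafellar _ _ z).
split; last by exists (chain_gain_sup x0 y0).
by exists x0; rewrite rockafellar_finite //; exists y0.
Qed.

Lemma rockafellar_c_subdiff : G `<=` c_subdiff c (rockafellar x0 y0).
Proof.
move=> [a b] Gab; rewrite /c_subdiff /=.
have Xa : projX G a by exists b.
suff -> : c_conj c (rockafellar x0 y0) b
          = (fine (rockafellar x0 y0 a) + c (a, b))%:E.
  by rewrite (rockafellar_finite Xa) -EFinB; congr (_%:E); lra.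
apply: le_anti; apply/andP; split.
  by rewrite EFinD -(rockafellar_finite Xa); apply: c_conj_le.
apply: le_ereal_inf_tmp => _ [z _ <-].
have := rockafellar_step (x0 := x0) (y0 := y0) z Gab.
rewrite (rockafellar_finite Xa).
case: (rockafellar x0 y0 z) => [r| |] //=; last by rewrite addye ?leey.
by rewrite -!EFinD !lee_fin; lra.
Qed.

End RockafellarPotential.

Lemma c_slack_le_Ifun (uniq : unique_potentials) x y :
  projX G x -> projY G y ->
  ((c_slack psi x y)%:E <= Ifun c G x y)%E.
Proof.
move=> Xx [x' Gx'y]; have Xx' : projX G x' by exists y.
have [C eqC] := uniq (rockafellar x' y) psi
  (rockafellar_c_convex Gx'y) psi_pot.1 (rockafellar_c_subdiff Gx'y) psi_pot.2.
have := eqC x Xx; have := eqC x' Xx'.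
rewrite (rockafellar_finite Gx'y Xx) (rockafellar_finite Gx'y Xx').
rewrite (potential_finite Xx) (potential_finite Xx') -!EFinB.
move=> -[eqC_x'] [eqC_x].
have phi_x'_ge0 : 0 <= fine (rockafellar x' y x').
  have := rockafellar_ge_base x' Gx'y.
  by rewrite (rockafellar_finite Gx'y Xx') lee_fin subrr.
have cycle : ((fine (rockafellar x' y x) + (c (x, y) - c (x', y)))%:E
               <= Ifun c G x y)%E.
  rewrite EFinD -(rockafellar_finite Gx'y Xx) -leeBrDr //.
  apply: rockafellar_le => n xs ys ch; rewrite leeBrDr // -EFinD.
  exact: chain_gain_le_Ifun.
apply: le_trans cycle; rewrite lee_fin.
by have := c_slack_eq0 Gx'y; rewrite /c_slack; lra.
Qed.

Lemma Ifun_eq_c_slack (uniq : unique_potentials) x y :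
  projX G x -> projY G y ->
  Ifun c G x y = (c_slack psi x y)%:E.
Proof.
move=> Xx Yy; apply: le_anti.
by rewrite Ifun_le_c_slack // c_slack_le_Ifun.
Qed.

End Potential.

End CyclicalMonotonicity.

Arguments potential_finite {R X Y c G psi} psi_pot {a}.
Arguments c_conj_finite {R X Y c G psi} psi_pot {b}.
Arguments c_slack_eq0 {R X Y c G psi} psi_pot {a b}.
Arguments Ifun_eq_c_slack {R X Y c G psi}.

Theorem proposition4p5 (R : realType) (X Y : completePseudoMetricType R)
  (polishX : polish X) (polishY : polish Y)
  (mu : probability (borel X) R) (nu : probability (borel Y) R)
  (c : X * Y -> R) (c_ge0 : forall z, 0 <= c z) (c_cont : continuous c)
  (pi : R -> probability (borel X * borel Y)%type R)
  (pi_coupling : forall eps, 0 < eps -> coupling mu nu (pi eps))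
  (pi_inv : forall eps, 0 < eps -> cyclically_invariant c eps mu nu (pi eps))
  (pis : probability (borel X * borel Y)%type R)
  (pis_coupling : coupling mu nu pis)
  (pi_conv : weak_conv pi pis)
  (uniq_pot : forall psi1 psi2 : X -> \bar R,
     c_convex c psi1 -> c_convex c psi2 ->
     spt pis `<=` c_subdiff c psi1 -> spt pis `<=` c_subdiff c psi2 ->
     exists C : R, forall x, projX (spt pis) x -> (psi1 x - psi2 x)%E = C%:E) :
  forall psi : X -> \bar R, kantorovich_potential c (spt pis) psi ->
  (forall x y, projX (spt pis) x -> projY (spt pis) y ->
     Ifun c (spt pis) x y = ((c (x, y))%:E - c_conj c psi y + psi x)%E /\
     (Ifun c (spt pis) x y < +oo)%E) /\
  (forall x y x' y', projX (spt pis) x -> projY (spt pis) y ->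
     projX (spt pis) x' -> projY (spt pis) y' ->
     spt pis (x', y) -> spt pis (x, y') ->
     (Ifun c (spt pis) x y + Ifun c (spt pis) x' y')%E =
     (c (x, y) + c (x', y') - c (x, y') - c (x', y))%:E).
Proof.
move=> psi pot; have I_eq := Ifun_eq_c_slack pot uniq_pot.
split=> [x y Xx Yy | x y x' y' Xx Yy Xx' Yy' Gx'y Gxy'].
  rewrite I_eq // (potential_finite pot Xx) (c_conj_finite pot Yy).
  by rewrite -EFinB -EFinD; split=> //; apply: ltry.
rewrite !I_eq // -EFinD; congr (_%:E).
have := c_slack_eq0 pot Gx'y; have := c_slack_eq0 pot Gxy'.
by rewrite /c_slack; lra.
Qed.
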